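(* Let $n\geq 2$. If $A$ is an $L_n$-good $n\times n$ matrix, then so is every matrix obtained from $A$ by a cyclic permutation of its rows, i.e. every matrix $B$ with rows $B_i=A_{i+k}$ ($1\leq i\leq n$, indices taken modulo $n$ in $\{1,\ldots,n\}$) for some fixed integer $k$. In particular, the matrix $C$ with $C_{i,n+1-i}=1$ for $1\leq i\leq n$ and all other entries $0$ is $L_n$-good.
   Context: For $n\geq 2$, the Lucas cube $L_n$ is identified with the set of vectors $\vec{x}=(x_1,\ldots,x_n)\in\mathbb{Z}_2^n$ with no two cyclically adjacent ones: there is no $i\in\{1,\ldots,n-1\}$ with $x_i=x_{i+1}=1$, and not both $x_1=1$ and $x_n=1$. An $n\times n$ matrix $A$ over $\mathbb{Z}_2$ is $L_n$-good if it is invertible and $A\vec{x}\in L_n$ for all $\vec{x}\in L_n$. $A_i$ denotes the $i$-th row of $A$. *)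

From mathcomp Require Import all_boot all_order all_algebra.
Set Implicit Arguments. Unset Strict Implicit. Unset Printing Implicit Defensive.
Import GRing.Theory Num.Theory.
Local Open Scope ring_scope.

(* Vectors of Z_2^n are column vectors 'cV['F_2]_n; index i : 'I_n stands for
   position i+1 of the paper. *)

Definition lucas (n : nat) (x : 'cV['F_2]_n) : bool :=
  [forall i : 'I_n, forall j : 'I_n,
     ((j : nat) == (i.+1 %% n)%N) ==> ~~ ((x i 0 == 1) && (x j 0 == 1))].

Definition Ln_good (n : nat) (A : 'M['F_2]_n) : Prop :=
  A \in unitmx /\ forall x : 'cV['F_2]_n, lucas x -> lucas (A *m x).

Definition cshift (n : nat) (k : int) (i : 'I_n) : nat :=
  `|((Posz i + k) %% Posz n)%Z|%N.

Lemma cshift_lt (n : nat) (k : int) (i : 'I_n) : (cshift k i < n)%N.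
Proof.
have n0 : (0 < n)%N by case: n i => [[]|].
rewrite /cshift -ltz_nat gez0_abs ?modz_ge0 ?ltz_pmod //;
  by rewrite eqz_nat -lt0n.
Qed.

Definition row_cshift (n : nat) (k : int) (A : 'M['F_2]_n) : 'M['F_2]_n :=
  \matrix_(i < n, j < n) A (Ordinal (cshift_lt k i)) j.

Definition antidiag (n : nat) : 'M['F_2]_n :=
  \matrix_(i < n, j < n) (if (i + j == n.-1)%N then 1 else 0).

From mathcomp Require Import all_boot all_order all_algebra.
From mathcomp Require Import perm zify.
Set Implicit Arguments. Unset Strict Implicit. Unset Printing Implicit Defensive.
Local Open Scope ring_scope.

(* Both matrices permute the rows of a good matrix (the identity, for [C]) by an
   automorphism of the n-cycle: a rotation, resp. the reflection i |-> n-1-i.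
   Permuting the rows of [A] permutes the coordinates of [A x], and a coordinate
   permutation that maps cycle edges to cycle edges preserves the Lucas cube. *)

Definition cycle_adj (n : nat) (i j : 'I_n) : bool :=
  ((j : nat) == i.+1 %% n)%N || ((i : nat) == j.+1 %% n)%N.

Definition cycle_edge_preserving (n : nat) (s : 'I_n -> 'I_n) : Prop :=
  forall i j : 'I_n, (j : nat) = (i.+1 %% n)%N -> cycle_adj (s i) (s j).

Section CycleAutomorphism.

Variables (n : nat) (s : {perm 'I_n}).
Hypothesis s_edge : cycle_edge_preserving s.

Lemma lucas_row_perm (x : 'cV['F_2]_n) : lucas x -> lucas (row_perm s x).
Proof.
move=> /forallP x_lucas; apply/forallP => i; apply/forallP => j; apply/implyP.
move/eqP/s_edge/orP; rewrite !mxE => -[] adj.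
- exact: implyP (forallP (x_lucas (s i)) (s j)) adj.
- by rewrite andbC; exact: implyP (forallP (x_lucas (s j)) (s i)) adj.
Qed.

Lemma Ln_good_row_perm (A : 'M['F_2]_n) : Ln_good A -> Ln_good (row_perm s A).
Proof.
move=> [A_unit A_lucas]; split.
  by rewrite row_permE unitmx_mul unitmx_perm A_unit.
move=> x x_lucas; rewrite !row_permE -mulmxA -row_permE.
exact/lucas_row_perm/A_lucas.
Qed.

End CycleAutomorphism.

Lemma Ln_good1 (n : nat) : Ln_good (1%:M : 'M['F_2]_n).
Proof. by split=> [|x]; rewrite ?unitmx1 ?mul1mx. Qed.

Definition rot_ord (n : nat) (k : int) (i : 'I_n) : 'I_n :=
  Ordinal (cshift_lt k i).

Lemma cshiftE (n : nat) (k : int) (i : 'I_n) :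
  cshift k i = ((i + `|(k %% Posz n)%Z|%N) %% n)%N.
Proof.
have k_ge0 : (0 <= (k %% Posz n)%Z)%R by case: n i => [[]//|n] i; rewrite modz_ge0.
by rewrite /cshift -modzDmr -(gez0_abs k_ge0) -PoszD modz_nat.
Qed.

Lemma rot_ord_inj (n : nat) (k : int) : injective (@rot_ord n k).
Proof.
move=> i j /(congr1 val); rewrite /= !cshiftE => /eqP.
by rewrite eqn_modDr !modn_small // => /eqP/val_inj.
Qed.

Lemma rot_ord_edge (n : nat) (k : int) : cycle_edge_preserving (@rot_ord n k).
Proof.
move=> i j ij; apply/orP; left; rewrite /= !cshiftE ij.
by rewrite modnDml -addn1 -[((_ %% n).+1)%N]addn1 modnDml addnAC.
Qed.

Lemma rev_ord_edge (n : nat) : cycle_edge_preserving (@rev_ord n).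
Proof.
move=> i j ij; apply/orP; right; rewrite /=.
have i_lt := ltn_ord i; have j_lt := ltn_ord j.
have [i_last|i_not_last] := eqVneq (i : nat) n.-1.
  move: ij; rewrite i_last prednK ?modnn; last lia.
  by move=> ->; rewrite subnn subn1 prednK ?modnn //; lia.
rewrite modn_small in ij; last lia.
rewrite modn_small; lia.
Qed.

Lemma row_cshift_perm (n : nat) (k : int) (A : 'M['F_2]_n) :
  row_cshift k A = row_perm (perm (@rot_ord_inj n k)) A.
Proof. by apply/matrixP => i j; rewrite !mxE permE. Qed.

Lemma antidiag_perm (n : nat) :
  antidiag n = row_perm (perm (@rev_ord_inj n)) 1%:M.
Proof.
apply/matrixP => i j; rewrite !mxE permE.
have -> : ((i + j)%N == n.-1) = (rev_ord i == j).
  apply/eqP/eqP => [ij | <-]; last by have := ltn_ord i; rewrite /=; lia.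
  by apply: val_inj => /=; lia.
by case: (rev_ord i == j).
Qed.

Theorem corollary3 (n : nat) : (2 <= n)%N ->
  (forall (A : 'M['F_2]_n) (k : int), Ln_good A -> Ln_good (row_cshift k A))
  /\ Ln_good (antidiag n).
Proof.
(* The argument does not need [2 <= n]. *)
move=> _; split=> [A k A_good|].
  rewrite row_cshift_perm; apply: Ln_good_row_perm A_good => i j ij.
  by rewrite !permE; apply: rot_ord_edge.
rewrite antidiag_perm; apply: Ln_good_row_perm (Ln_good1 n) => i j ij.
by rewrite !permE; apply: rev_ord_edge.
Qed.
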